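(* Let $G$ be an oriented graph derived from a Burling tree $(T,r,\ell,c)$, and let $u,v,w$ be three distinct vertices of $G$ appearing in this order along a branch of $T$. Then every path (not necessarily directed) in $G$ from $u$ to $w$ goes through an in-neighbor of $v$ in $G$. In particular, $N^-[v]$ is a full in-star cutset of $G$ and $N[v]$ is a full star cutset of $G$, each of which separates $u$ and $w$.
   Context: Oriented graphs are finite, without loops, multiple arcs or pairs of opposite arcs; paths and connectivity in an oriented graph refer to its underlying graph. In a rooted tree $T$ with root $r$, each non-root vertex $v$ has a parent $p(v)$; children, leaves, ancestors and descendants are as usual. A branch is a sequence $v_1\dots v_k$ ($k\ge0$) with $v_i$ the parent of $v_{i+1}$; it starts at $v_1$. A Burling tree is a 4-tuple $(T,r,\ell,c)$: $T$ a rooted tree with root $r$; $\ell$ assigns to each non-leaf vertex $v$ one of its children $\ell(v)$ (the last-born of $v$); $c$ assigns to every vertex $v$ that is neither the root nor a last-born the vertex-set of a (possibly empty) branch starting at $\ell(p(v))$, and $c(v)=\emptyset$ if $v$ is the root or a last-born. The oriented graph fully derived from it has vertex-set $V(T)$ and an arc $uv$ iff $v\in c(u)$; an oriented graph is derived from the Burling tree if it is an induced subgraph of the fully derived one. $N^-[v]$ is $v$ together with its in-neighbors, and $N[v]$ is $v$ together with all its neighbors. A full in-star cutset of $G$ is a set $N^-[v]$ such that $G\setminus N^-[v]$ is disconnected; a full star cutset is a set $N[v]$ such that $G\setminus N[v]$ is disconnected. A set $S$ separates $u$ and $w$ if $u$ and $w$ lie in distinct connected components of $G\setminus S$. *)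

From mathcomp Require Import all_boot.
Set Implicit Arguments. Unset Strict Implicit. Unset Printing Implicit Defensive.

(* A rooted tree on a finite vertex type V is given by a root r and a parent
   map par with par r = r, every vertex reaching r by iterating par.
   (The tree edges are {x, par x} for x <> r.) *)
Definition is_rooted_tree (V : finType) (r : V) (par : V -> V) : Prop :=
  par r = r /\ forall x : V, exists n, iter n par x = r.

Definition is_child (V : finType) (r : V) (par : V -> V) (x y : V) : bool :=
  (x != r) && (par x == y).

(* vertex set of a (possibly empty) branch starting at x:
   either empty, or {x = v_1, ..., v_k} with v_i the parent of v_{i+1} *)
Definition is_branch_set_from (V : finType) (r : V) (par : V -> V)
    (x : V) (B : {set V}) : Prop :=
  B = set0 \/
  exists s : seq V, path (fun a b => is_child r par b a) x s /\ B = [set:: x :: s].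

Record burling_tree (V : finType) := BurlingTree {
  bt_root : V;
  bt_par : V -> V;
  bt_last : V -> V;          (* last-born of a non-leaf vertex *)
  bt_c : V -> {set V};
  bt_tree : is_rooted_tree bt_root bt_par;
  bt_last_child : forall v : V, (exists x, is_child bt_root bt_par x v) ->
                    is_child bt_root bt_par (bt_last v) v;
  bt_c_spec : forall v : V,
    if (v == bt_root) || (bt_last (bt_par v) == v)
    then bt_c v = set0
    else is_branch_set_from bt_root bt_par (bt_last (bt_par v)) (bt_c v)
}.

Section Derived.
Variables (V : finType) (B : burling_tree V).

Definition strict_anc (a b : V) : Prop :=
  a <> b /\ exists n, iter n (bt_par B) b = a.

(* the fully derived oriented graph: arc x -> y iff y \in c x;
   G is the induced subgraph on the vertex set S *)
Definition g_arc (S : {set V}) (x y : V) : bool :=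
  [&& x \in S, y \in S & y \in bt_c B x].

Definition g_adj (S : {set V}) (x y : V) : bool := g_arc S x y || g_arc S y x.

Definition in_nbhd_closed (S : {set V}) (v : V) : {set V} :=
  v |: [set x in S | g_arc S x v].
Definition nbhd_closed (S : {set V}) (v : V) : {set V} :=
  v |: [set x in S | g_adj S x v].

Definition connected_avoiding (S X : {set V}) (a b : V) : Prop :=
  a \in S :\: X /\
  exists p : seq V, path (fun x y => g_adj S x y && (y \notin X)) a p /\ last a p = b.

Definition separates (S X : {set V}) (a b : V) : Prop :=
  a \in S :\: X /\ b \in S :\: X /\ ~ connected_avoiding S X a b.

Definition disconnected_after (S X : {set V}) : Prop :=
  exists a b, a \in S :\: X /\ b \in S :\: X /\ ~ connected_avoiding S X a b.

Definition full_in_star_cutset (S : {set V}) (v : V) : Prop :=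
  v \in S /\ disconnected_after S (in_nbhd_closed S v).
Definition full_star_cutset (S : {set V}) (v : V) : Prop :=
  v \in S /\ disconnected_after S (nbhd_closed S v).

End Derived.

(* An arc x -> y means that y lies on a branch starting at the last-born sibling of x;
   since siblings are incomparable in the ancestor order, so are x and y.  Consider the
   subtree strictly below v.  An arc leaving it ends below a sibling of a vertex of the
   subtree, hence stays inside it, while an arc a -> b entering it from a vertex a that
   is not strictly below v runs along a branch from a sibling of a down to b; that
   sibling is not strictly below v, so the branch passes through v and a -> v is an arc.
   Hence the edge by which a u-w path first enters the subtree starts at an in-neighbour
   of v, while u and w, being comparable with v, are not adjacent to v. *)

From mathcomp Require Import all_boot.
Set Implicit Arguments. Unset Strict Implicit. Unset Printing Implicit Defensive.

Lemma path_crossing (T : eqType) (e : rel T) (P : pred T) x p :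
  path e x p -> ~~ P x -> P (last x p) ->
  exists x1 x2, [/\ x1 \in x :: p, e x1 x2, ~~ P x1 & P x2].
Proof.
elim: p x => [|y p IHp] x /=; first by move=> _ /negbTE ->.
case/andP=> exy yp Nx; have [Py _|Ny] := boolP (P y); first by exists x, y; rewrite mem_head.
case/(IHp y yp Ny)=> [x1 [x2 [x1p ex12 Nx1 Px2]]].
by exists x1, x2; rewrite inE x1p orbT.
Qed.

Lemma path_avoiding (T : finType) (e : rel T) (X : {set T}) x p :
  path (fun y z => e y z && (z \notin X)) x p -> path e x p /\ all (fun y => y \notin X) p.
Proof. by elim: p x => //= y p IHp x /andP[/andP[-> ->] /IHp[-> ->]]. Qed.

Section AncestorOrder.
Variables (V : finType) (r : V) (par : V -> V).
Hypothesis tree : is_rooted_tree r par.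

Definition anc (a b : V) : bool := fconnect par b a.

Lemma ancP a b : reflect (exists n, iter n par b = a) (anc a b).
Proof.
apply: (iffP idP) => [/iter_findex <-|[n <-]]; first by eexists.
exact: fconnect_iter.
Qed.

Lemma anc_refl a : anc a a. Proof. exact: connect0. Qed.

Lemma anc_par a : anc (par a) a. Proof. exact: fconnect1. Qed.

Lemma anc_trans a b c : anc a b -> anc b c -> anc a c.
Proof. by move=> ab bc; apply: connect_trans bc ab. Qed.

Lemma anc_total a b x : anc a x -> anc b x -> anc a b || anc b a.
Proof.
move=> /ancP[n <-] /ancP[m <-]; have [le_nm|/ltnW le_mn] := leqP n m.
  by apply/orP; right; apply/ancP; exists (m - n); rewrite -iterD subnK.
by apply/orP; left; apply/ancP; exists (n - m); rewrite -iterD subnK.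
Qed.

Lemma anc_par_strict z a : anc z a -> z != a -> anc z (par a).
Proof.
case/ancP=> [[|n] <-]; first by rewrite eqxx.
by move=> _; apply/ancP; exists n; rewrite -iterSr.
Qed.

Lemma iter_par_root n : iter n par r = r.
Proof. by case: tree => par_r _; elim: n => //= n ->. Qed.

(* The root is reached from every vertex, so a cycle of [par] can only sit at the root. *)
Lemma iter_par_cycle n x : iter n.+1 par x = x -> x = r.
Proof.
move=> cyc; have [_ /(_ x) [N reach]] := tree.
have iter_mul j : iter (j * n.+1) par x = x by elim: j => [|j IHj] //; rewrite mulSn iterD IHj.
by rewrite -(iter_mul N) -(subnK (leq_pmulr N (ltn0Sn n))) iterD reach iter_par_root.
Qed.

Lemma anc_antisym a b : anc a b -> anc b a -> a = b.
Proof.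
move=> /ancP[n ba] /ancP[m ab].
case: n ba => [<- //|n ba].
have /iter_par_cycle b_r: iter (m + n).+1 par b = b by rewrite -addnS iterD ba.
by rewrite -ba b_r iter_par_root.
Qed.

Lemma anc_par_self x : anc x (par x) -> x = r.
Proof. by case/ancP=> n; rewrite -iterSr; apply: iter_par_cycle. Qed.

Lemma anc_sibling a b : par a = par b -> a != r -> a != b -> ~~ anc a b.
Proof.
move=> sib a_r a_b; apply: contra a_r => ab.
by apply/eqP/anc_par_self; rewrite sib anc_par_strict.
Qed.

Definition branch_rel : rel V := fun a b => is_child r par b a.

Lemma branch_anc L s y : path branch_rel L s -> y \in L :: s -> anc L y.
Proof.
elim: s L => [|a s IHs] L /=; first by rewrite inE => _ /eqP ->; apply: anc_refl.
case/andP=> /andP[_ /eqP <-] La; rewrite inE => /predU1P[->|ys]; first exact: anc_refl.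
exact: anc_trans (anc_par a) (IHs a La ys).
Qed.

Lemma branch_between L s y z : path branch_rel L s -> y \in L :: s ->
  anc L z -> anc z y -> z \in L :: s.
Proof.
elim: s L => [|a s IHs] L /=.
  by rewrite inE => _ /eqP -> Lz zy; rewrite (anc_antisym zy Lz) inE.
case/andP=> /andP[_ /eqP par_a] La; rewrite inE => /predU1P[->|ys] Lz zy.
  by rewrite (anc_antisym zy Lz) mem_head.
have [az|za] := orP (anc_total (branch_anc La ys) zy).
  by rewrite inE (IHs a La ys az zy) orbT.
have [<-|z_a] := eqVneq z a; first by rewrite !inE eqxx orbT.
by rewrite -par_a in Lz *; rewrite (anc_antisym (anc_par_strict za z_a) Lz) mem_head.
Qed.

End AncestorOrder.

Section BurlingArcs.
Variables (V : finType) (B : burling_tree V).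
Local Notation r := (bt_root B).
Local Notation par := (bt_par B).
Local Notation anc := (anc par).
Local Notation tree := (bt_tree B).

Lemma arc_branch x y : y \in bt_c B x -> x != r /\
  exists L s, [/\ par L = par x, L != r, L != x,
                  path (branch_rel r par) L s & bt_c B x = [set:: L :: s]].
Proof.
move=> cxy; have := bt_c_spec B x.
case: ifP => [_ c0|/norP[x_r L_x]]; first by rewrite c0 inE in cxy.
case=> [c0|[s [Ls cx]]]; first by rewrite c0 inE in cxy.
have x_child : is_child r par x (par x) by rewrite /is_child x_r eqxx.
have /andP[L_r /eqP par_L] : is_child r par (bt_last B (par x)) (par x).
  exact: bt_last_child (ex_intro _ x x_child).
by split=> //; exists (bt_last B (par x)), s.
Qed.

Lemma arc_incomparable x y : y \in bt_c B x -> ~~ anc x y /\ ~~ anc y x.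
Proof.
move=> cxy; have [x_r [L [s [sib L_r L_x Ls cx]]]] := arc_branch cxy.
have Ly : anc L y by apply: branch_anc Ls _; rewrite -[_ \in _]in_set -cx.
have not_Lx : ~~ anc L x by apply: (anc_sibling tree).
have not_xL : ~~ anc x L by rewrite (anc_sibling tree) // eq_sym.
split; apply/negP.
  by move=> xy; case/orP: (anc_total xy Ly); apply/negP.
by move=> yx; rewrite (anc_trans Ly yx) in not_Lx.
Qed.

Lemma anc_not_adj (S : {set V}) (x y : V) : anc x y -> ~~ g_adj B S x y.
Proof.
by move=> xy; apply/norP; split; apply/negP => /and3P[_ _ /arc_incomparable[]]; rewrite xy.
Qed.

Definition strict_desc (v x : V) : bool := (x != v) && anc v x.

(* The branch [c a] starts at a sibling of [a]; if it reaches below [v] without passing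
   through [v], that sibling, hence [a] itself, already lies strictly below [v]. *)
Lemma adj_into_subtree (S : {set V}) (v a b : V) : v \in S -> g_adj B S a b ->
  ~~ strict_desc v a -> strict_desc v b -> g_arc B S a v.
Proof.
move=> vS /orP[] /and3P[aS bS arc] a_out /andP[b_v vb].
- have [a_r [L [s [sib _ _ Ls ca]]]] := arc_branch arc.
  have Lb : anc L b by apply: branch_anc Ls _; rewrite -[_ \in _]in_set -ca.
  have Lv : anc L v.
    have /orP[//|vL] := anc_total Lb vb.
    have [<-|v_L] := eqVneq v L; first exact: anc_refl.
    have vpa : anc v (par a) by rewrite -sib; apply: anc_par_strict.
    have a_v : a = v.
      by apply/eqP; move: a_out; rewrite /strict_desc (anc_trans vpa (anc_par _ a)) andbT negbK.
    by rewrite -a_v in vpa; rewrite (anc_par_self tree vpa) eqxx in a_r.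
  by rewrite /g_arc aS vS ca in_set (branch_between tree Ls _ Lv vb) // -[_ \in _]in_set -ca.
- have [_ [L [s [sib _ _ Ls cb]]]] := arc_branch arc.
  have La : anc L a by apply: branch_anc Ls _; rewrite -[_ \in _]in_set -cb.
  have vpb : anc v (par b) by apply: anc_par_strict; rewrite // eq_sym.
  have va : anc v a by rewrite -sib in vpb; apply: anc_trans (anc_trans vpb (anc_par _ L)) La.
  have a_v : a = v by apply/eqP; move: a_out; rewrite /strict_desc va andbT negbK.
  by have [_] := arc_incomparable arc; rewrite a_v vb.
Qed.

Lemma path_into_subtree_meets_in_nbr (S : {set V}) (v u : V) p : v \in S ->
  path (g_adj B S) u p -> ~~ strict_desc v u -> strict_desc v (last u p) ->
  exists2 x, x \in u :: p & g_arc B S x v.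
Proof.
move=> vS up u_out w_in; have [x [y [xp xy x_out y_in]]] := path_crossing up u_out w_in.
by exists x => //; apply: adj_into_subtree xy x_out y_in.
Qed.

Lemma in_nbhd_closed_sub (S : {set V}) (v : V) :
  in_nbhd_closed B S v \subset nbhd_closed B S v.
Proof.
apply/subsetP => x; rewrite !inE /g_adj.
by case/predU1P=> [->|/andP[-> ->]]; rewrite ?eqxx ?orbT.
Qed.

Lemma comparable_notin_nbhd_closed (S : {set V}) (v x : V) :
  x != v -> anc x v || anc v x -> x \notin nbhd_closed B S v.
Proof.
move=> x_v cmp; have not_adj : ~~ g_adj B S x v.
  by case/orP: cmp => /(anc_not_adj S) //; rewrite /g_adj orbC.
by rewrite !inE (negbTE x_v) (negbTE not_adj) andbF.
Qed.

Lemma arc_in_in_nbhd_closed (S : {set V}) (x v : V) :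
  g_arc B S x v -> x \in in_nbhd_closed B S v.
Proof. by move=> xv; rewrite !inE xv andbT; case/and3P: xv => ->; rewrite orbT. Qed.

Lemma separates_of_meets (S X : {set V}) (a b : V) : a \in S :\: X -> b \in S :\: X ->
  (forall p, path (g_adj B S) a p -> last a p = b -> exists2 x, x \in a :: p & x \in X) ->
  separates B S X a b.
Proof.
move=> aSX bSX meets; do 2!split=> //; case=> _ [p [/path_avoiding[ap /allP p_out] ab]].
have [x] := meets p ap ab; rewrite inE => /predU1P[-> aX|xp xX].
  by move: aSX; rewrite inE aX.
by move: (p_out x xp); rewrite xX.
Qed.

End BurlingArcs.

Theorem lemma5p3 (V : finType) (B : burling_tree V) (S : {set V}) (u v w : V) :
  u \in S -> v \in S -> w \in S ->
  strict_anc B u v -> strict_anc B v w ->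
  (forall p : seq V, path (g_adj B S) u p -> last u p = w -> uniq (u :: p) ->
     exists x, x \in u :: p /\ g_arc B S x v)
  /\ full_in_star_cutset B S v /\ separates B S (in_nbhd_closed B S v) u w
  /\ full_star_cutset B S v /\ separates B S (nbhd_closed B S v) u w.
Proof.
move=> uS vS wS [u_v /ancP uv] [v_w /ancP vw].
have u_out : ~~ strict_desc B v u.
  by apply/negP => /andP[_ vu]; apply: u_v; exact: (anc_antisym (bt_tree B) uv vu).
have w_in : strict_desc B v w by rewrite /strict_desc vw andbT; apply/eqP => /esym.
have meets p : path (g_adj B S) u p -> last u p = w -> exists2 x, x \in u :: p & g_arc B S x v.
  by move=> up upw; apply: path_into_subtree_meets_in_nbr; rewrite ?upw.
have u_nbhd : u \notin nbhd_closed B S v.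
  by apply: comparable_notin_nbhd_closed; [apply/eqP | rewrite uv].
have w_nbhd : w \notin nbhd_closed B S v.
  by apply: comparable_notin_nbhd_closed; [apply/eqP => /esym | rewrite vw orbT].
have sep_in : separates B S (in_nbhd_closed B S v) u w.
  apply: separates_of_meets => [||p up upw].
  - by rewrite in_setD uS andbT (contra (subsetP (in_nbhd_closed_sub B S v) u)).
  - by rewrite in_setD wS andbT (contra (subsetP (in_nbhd_closed_sub B S v) w)).
  by have [x xp /arc_in_in_nbhd_closed] := meets p up upw; exists x.
have sep : separates B S (nbhd_closed B S v) u w.
  apply: separates_of_meets => [||p up upw]; rewrite ?in_setD ?uS ?wS ?andbT //.
  have [x xp /arc_in_in_nbhd_closed] := meets p up upw.
  by exists x => //; apply: (subsetP (in_nbhd_closed_sub B S v)).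
split; first by move=> p up upw _; have [x xp xv] := meets p up upw; exists x.
split; first by split=> //; exists u, w; exact: sep_in.
split=> //; split=> //.
by split=> //; exists u, w; exact: sep.
Qed.
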